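(* There is a mapping $\Phi :(\mathfrak{M}, \supseteq )\rightarrow (\mathfrak{M_H}, \supseteq )$ such that for every $I\in \mathfrak{M}$, $\Phi (I)\supseteq I$ and $\Phi (I)\approx _{\mathrm{sep}} I$.
   Context: All ideals on $\omega$ considered are proper and contain all finite subsets of $\omega$; they are viewed as subsets of the Cantor space $2^\omega=\mathcal{P}(\omega)$. $\mathfrak{M}$ is the set of all ideals on $\omega$ that are meager subsets of $2^\omega$, ordered by reverse inclusion $\supseteq$ (so larger ideals are stronger conditions). For $X\subseteq\omega$ and an ideal $I$, $I\upharpoonright X=\{A\in I: A\subseteq X\}$, and $I^+=\mathcal{P}(\omega)\setminus I$. An ideal $I$ is hereditary meager if for every $X\in I^+$ the set $I\upharpoonright X$ is meager in $2^X$; $\mathfrak{M_H}$ is the set of hereditary meager ideals ordered by $\supseteq$. Two meager ideals are compatible (in $(\mathfrak{M},\supseteq)$) if some meager ideal contains both, and disjoint otherwise. For $I,J\in\mathfrak{M}$, $I\approx_{\mathrm{sep}}J$ means: for every meager ideal $K$, $K$ is disjoint with $I$ iff $K$ is disjoint with $J$. *)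

From HB Require Import structures.
From mathcomp Require Import all_boot all_order all_algebra.
From mathcomp Require Import all_classical all_reals.
From mathcomp Require Import topology cantor.
Set Implicit Arguments. Unset Strict Implicit. Unset Printing Implicit Defensive.
Local Open Scope classical_set_scope.

(* Subsets of omega are points of the Cantor space 2^omega = nat -> bool
   (characteristic functions), with the product topology (cantor_space). *)

Definition nowhere_dense (T : topologicalType) (A : set T) : Prop :=
  interior (closure A) = set0.

Definition meager (T : topologicalType) (A : set T) : Prop :=
  exists F : nat -> set T,
    (forall n, nowhere_dense (F n)) /\ A `<=` \bigcup_n F n.

Definition subsetb (A B : cantor_space) : Prop := forall n, A n -> B n.
Definition unionb (A B : cantor_space) : cantor_space := fun n => A n || B n.
Definition finiteb (A : cantor_space) : Prop := exists N, forall n, A n -> (n < N)%N.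

Definition ideal (I : set cantor_space) : Prop :=
  [/\ ~ I (fun _ => true),
      (forall A, finiteb A -> I A),
      (forall A B, subsetb A B -> I B -> I A) &
      (forall A B, I A -> I B -> I (unionb A B))].

Definition meager_ideal (I : set cantor_space) : Prop :=
  ideal I /\ meager I.

Definition cantor_sub (X : cantor_space) : Type :=
  prod_topology (fun _ : {n : nat | X n} => bool).

Definition restr (I : set cantor_space) (X : cantor_space) : set (cantor_sub X) :=
  (fun A : cantor_space => (fun i : {n : nat | X n} => A (proj1_sig i)) : cantor_sub X)
    @` [set A | I A /\ subsetb A X].

Definition hereditary_meager (I : set cantor_space) : Prop :=
  meager_ideal I /\ forall X : cantor_space, ~ I X -> @meager (prod_topology (fun _ : {n : nat | X n} => bool)) (@restr I X).

Definition compatible (I J : set cantor_space) : Prop :=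
  exists K, meager_ideal K /\ I `<=` K /\ J `<=` K.
Definition disjoint_ideals (I J : set cantor_space) : Prop := ~ compatible I J.

Definition sep_equiv (I J : set cantor_space) : Prop :=
  forall K, meager_ideal K -> (disjoint_ideals K I <-> disjoint_ideals K J).

From mathcomp Require Import all_boot all_classical topology cantor.

Set Implicit Arguments.
Unset Strict Implicit.
Unset Printing Implicit Defensive.
Local Open Scope classical_set_scope.

(* Talagrand: an ideal L is meager iff there are nonempty finite sets Q_n with
   min Q_n >= n of which every member of L contains only finitely many.  Call X
   thin for L when such a sequence can be chosen inside X; Phi(L) is the family
   [thick L] of the sets that are not thin.  It contains L, and it is an ideal:
   if no member of L contains infinitely many Q_n inside Y u Z, the traces of
   the Q_n on Y and on Z give such sequences inside Y and inside Z.  A witness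
   sequence for a thin X shows that the members of Phi(L) below X eventually
   fail to contain Q_n, which is a meager condition in 2^X, so Phi(L) is
   hereditarily meager.  As Phi is monotone, a meager ideal containing K and I
   yields the meager ideal Phi(L) containing K and Phi(I). *)

Lemma meagerS (T : topologicalType) (A B : set T) :
  A `<=` B -> meager B -> meager A.
Proof. by move=> AB [F [F_nd BF]]; exists F; split => //; apply: subset_trans BF. Qed.

Section BoolProduct.
Variable T : eqType.
Local Notation P := (prod_topology (fun _ : T => bool)).

Definition cyl (x : P) (s : seq T) : set P := [set y | {in s, forall i, y i = x i}].

Lemma cyl_nbhs x s : nbhs x (cyl x s).
Proof.
elim: s => [|a s IH]; first by apply: filterS filterT => y _ i.
have xa : nbhs x (proj a @^-1` [set x a]).
  by apply: (@proj_continuous T (fun _ => bool) a x); apply/principal_filterP.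
apply: filterS (filterI xa IH) => y [ya ys] i.
by rewrite inE => /predU1P [->|/ys].
Qed.

Lemma nbhs_cyl x U : nbhs x U -> exists s, cyl x s `<=` U.
Proof.
pose G := filter_from [set: seq T] (cyl x).
have G_filter : Filter G.
  apply: filter_from_filter; first by exists [::].
  move=> s1 s2 _ _; exists (s1 ++ s2) => // y y_s12.
  by split => i si; apply: y_s12; rewrite mem_cat si ?orbT.
have : G --> x.
  apply/cvg_sup => i A /=.
  rewrite (@nbhsE (initial_topology (proj i : P -> bool))) => -[B [[C _ <-] Cx] BA].
  exists [:: i] => // y y_i; apply: BA; rewrite /preimage /=.
  by rewrite (_ : proj i y = proj i x) //; apply: y_i; rewrite mem_head.
by move=> /(_ U) xU /xU [s _ sU]; exists s.
Qed.

Definition often (a : T -> bool) (Q : nat -> seq T) :=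
  forall N, exists2 n, (N <= n)%N & all a (Q n).

Definition escaping (Q : nat -> seq T) :=
  forall (s : seq T) N, exists2 n, (N <= n)%N & {in Q n, forall i, i \notin s}.

Lemma oftenP a Q : often a Q ->
  exists phi : nat -> nat, forall k, (k <= phi k)%N /\ all a (Q (phi k)).
Proof.
move=> oQ; have /choice [phi phiP] : forall k, exists n, (k <= n)%N /\ all a (Q n).
  by move=> k; have [n kn aQn] := oQ k; exists n.
by exists phi.
Qed.

Lemma not_often a Q : ~ often a Q ->
  exists N, forall n, (N <= n)%N -> ~~ all a (Q n).
Proof.
move=> noQ; apply: contrapT => h; apply: noQ => N.
apply: contrapT => hN; apply: h; exists N => n Nn; apply/negP => aQ.
by apply: hN; exists n.
Qed.

Lemma meager_not_often Q : escaping Q -> @meager P [set a | ~ often a Q].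
Proof.
move=> escQ.
exists (fun m => [set a : P | forall n, (m <= n)%N -> ~~ all a (Q n)]); split;
  last by move=> a /not_often [m am]; exists m.
move=> m; apply/seteqP; split => // x /= /nbhs_cyl [s xsF].
have [n mn Qns] := escQ s m.
pose x' : P := fun i => (i \in Q n) || x i.
have xx' : cyl x s x'.
  move=> i si; rewrite /x'; case: (boolP (i \in Q n)) => // /Qns.
  by rewrite si.
have [a [Fa ax']] := xsF _ xx' _ (cyl_nbhs x' (Q n)).
by move/negP: (Fa n mn); apply; apply/allP => i iQ; rewrite (ax' i iQ) /x' iQ.
Qed.

End BoolProduct.

Lemma escaping_pmap_insub (T : eqType) (p : pred T) (S : subEqType p) Q :
  escaping Q -> escaping (fun n => pmap (insub : T -> option S) (Q n)).
Proof.
move=> escQ s N; have [n Nn Qns] := escQ (map val s) N.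
exists n => // i; rewrite mem_pmap_sub => /Qns; apply: contra => si.
exact: map_f.
Qed.

Lemma block_index_unique (K : nat -> nat) n n' i :
  {homo K : m n / (m <= n)%N} ->
  i \in index_iota (K n) (K n.+1) -> i \in index_iota (K n') (K n'.+1) -> n = n'.
Proof.
move=> K_mono; rewrite !mem_index_iota => /andP [Kni iKn] /andP [Kn'i iKn'].
apply/eqP; rewrite eqn_leq; apply/andP; split; rewrite leqNgt; apply/negP => lt.
- by have := leq_trans (K_mono _ _ lt) Kni; rewrite leqNgt iKn'.
- by have := leq_trans (K_mono _ _ lt) Kn'i; rewrite leqNgt iKn.
Qed.

Definition spread (X : cantor_space) (Q : nat -> seq nat) :=
  forall n, [/\ Q n != [::], all (leq n) (Q n) & all X (Q n)].

Lemma spread_escaping X Q : spread X Q -> escaping Q.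
Proof.
move=> sprQ s N; exists (maxn N (\max_(j <- s) j).+1); first exact: leq_maxl.
move=> i iQ; apply/negP => si.
have [_ /allP/(_ i iQ) le_i _] := sprQ (maxn N (\max_(j <- s) j).+1).
have := leq_trans (leq_maxr _ _) le_i.
by rewrite ltnNge (@leq_bigmax_seq _ _ _ id _ si isT).
Qed.

Lemma spread_sub X Y Q : subsetb X Y -> spread X Q -> spread Y Q.
Proof. by move=> XY sprQ n; have [ne le QX] := sprQ n; split => //; apply: sub_all QX. Qed.

Lemma spread_filter (X Y : cantor_space) Q (g : nat -> nat) (p : pred nat) :
  spread X Q -> (forall n, (n <= g n)%N) -> (forall n, has p (Q (g n))) ->
  (forall i, X i -> p i -> Y i) -> spread Y (fun n => [seq i <- Q (g n) | p i]).
Proof.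
move=> sprQ le_g hasp XpY n; have [_ /allP le /allP QX] := sprQ (g n); split.
- by rewrite -size_eq0 size_filter -lt0n -has_count.
- apply/allP => i; rewrite mem_filter => /andP [_ iQ].
  exact: leq_trans (le_g n) (le i iQ).
- apply/allP => i; rewrite mem_filter => /andP [pi iQ].
  exact: XpY (QX i iQ) pi.
Qed.

Definition thin (L : set cantor_space) (X : cantor_space) :=
  exists2 Q, spread X Q & forall A, L A -> ~ often A Q.

Definition thick (L : set cantor_space) : set cantor_space := [set X | ~ thin L X].

Lemma thickP L Y Q : thick L Y -> spread Y Q -> exists2 A, L A & often A Q.
Proof.
move=> tY sprQ; apply: contrapT => noA; apply: tY; exists Q => // A LA oA.
by apply: noA; exists A.
Qed.

Lemma thick_often L X Y Q :
  thick L Y -> spread X Q -> often Y Q -> exists2 A, L A & often A Q.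
Proof.
move=> tY sprQ /oftenP [phi phiP].
have sprY : spread Y (fun k => Q (phi k)).
  move=> k; have [k_phi YQ] := phiP k; have [ne le _] := sprQ (phi k).
  by split => //; apply: sub_all le => i; apply: leq_trans.
have [A LA oA] := thickP tY sprY; exists A => // N.
have [k Nk AQ] := oA N; exists (phi k) => //.
exact: leq_trans Nk (phiP k).1.
Qed.

Lemma thick_not_often L X Y Q :
  spread X Q -> (forall A, L A -> ~ often A Q) -> thick L Y -> ~ often Y Q.
Proof. by move=> sprQ noL tY /(thick_often tY sprQ) [A LA]; apply: noL. Qed.

Lemma thickS L X Y : subsetb X Y -> thick L Y -> thick L X.
Proof. by move=> XY tY [Q sprQ noL]; apply: tY; exists Q => //; apply: spread_sub sprQ. Qed.

Lemma thickU L Y Z : ideal L -> thick L Y -> thick L Z -> thick L (unionb Y Z).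
Proof.
move=> [_ _ _ LU] tY tZ [Q sprQ noL].
have [N notY] := not_often (thick_not_often sprQ noL tY).
have [M notZ] := not_often (thick_not_often sprQ noL tZ).
pose K := maxn N M.
have hasY n : has Y (Q (n + K)).
  have /allPn [i iQ Zi] := notZ _ (leq_trans (leq_maxr N M) (leq_addl n K)).
  apply/hasP; exists i => //; have [_ _ /allP YZQ] := sprQ (n + K).
  by have := YZQ i iQ; rewrite /unionb (negbTE Zi) orbF.
have sprY : spread Y (fun n => [seq i <- Q (n + K) | Y i]).
  by apply: spread_filter sprQ (fun n => leq_addr K n) hasY (fun i _ Yi => Yi).
have [A1 LA1 /oftenP [phi phiP]] := thickP tY sprY.
have le_phi k : (k <= phi k + K)%N by apply: leq_trans (phiP k).1 (leq_addr K _).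
have sprZ : spread Z (fun k => [seq i <- Q (phi k + K) | ~~ Y i]).
  apply: spread_filter sprQ le_phi _ _ => [k|i].
  - by rewrite has_predC notY // (leq_trans (leq_maxl N M) (leq_addl _ _)).
  - by case/orP => [Yi|//]; rewrite /= Yi.
have [A2 LA2 oA2] := thickP tZ sprZ.
apply: (noL _ (LU _ _ LA1 LA2)) => n0.
have [k n0k A2Q] := oA2 n0; exists (phi k + K); first exact: leq_trans n0k (le_phi k).
apply/allP => i iQ; rewrite /unionb; case: (boolP (Y i)) => Yi.
  by rewrite (allP (phiP k).2) // mem_filter Yi.
by rewrite (allP A2Q) ?orbT // mem_filter /= Yi.
Qed.

Section Talagrand.
Variable F : nat -> set cantor_space.
Hypothesis F_nd : forall n, nowhere_dense (F n).

Definition patch (k : nat) (t s : nat -> bool) : cantor_space :=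
  fun i => if (i < k)%N then t i else s i.

Lemma patch_avoid k K t s j : (k <= K)%N -> exists K' (s' : nat -> bool), [/\ (K <= K')%N,
  {in index_iota k K, s' =1 s} & cyl (patch k t s') (iota 0 K') `<=` ~` F j].
Proof.
move=> kK; pose y0 := patch k t s.
have [y1 y0y1 ny1] : exists2 y1, cyl y0 (iota 0 K) y1 & ~ closure (F j) y1.
  apply: contrapT => h; suff : interior (closure (F j)) y0 by rewrite F_nd.
  apply: filterS (cyl_nbhs y0 (iota 0 K)) => y y0y; apply: contrapT => ny.
  by apply: h; exists y.
have [B y1B FB] : exists2 B, nbhs y1 B & ~ (F j `&` B !=set0).
  apply: contrapT => h; apply: ny1 => B y1B; apply: contrapT => FB.
  by apply: h; exists B.
have [r y1r] := nbhs_cyl y1B.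
exists (maxn K (\max_(i <- r) i).+1), y1; split.
- exact: leq_maxl.
- move=> i; rewrite mem_index_iota => /andP [ki iK].
  by rewrite (y0y1 i) ?mem_iota ?add0n // /y0 /patch ltnNge ki.
- move=> y ay Fy; apply: FB; exists y; split => //; apply: y1r => i ir.
  have iK' : (i < maxn K (\max_(i <- r) i).+1)%N.
    by rewrite leq_max ltnS (@leq_bigmax_seq _ _ _ id _ ir isT) orbT.
  rewrite (ay i) ?mem_iota ?add0n // /patch; case: ifP => // ik.
  by rewrite (y0y1 i) ?mem_iota ?add0n /y0 /patch ?ik // (leq_trans ik kK).
Qed.

Lemma patch_avoid_all (cs : seq (seq bool * nat)) k K s : (k <= K)%N ->
  exists K' (s' : nat -> bool), [/\ (K <= K')%N, {in index_iota k K, s' =1 s} &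
    forall c, c \in cs -> cyl (patch k (nth false c.1) s') (iota 0 K') `<=` ~` F c.2].
Proof.
elim: cs K s => [|c cs IH] K s kK; first by exists K, s.
have [K1 [s1 [KK1 s1s avoid1]]] := IH K s kK.
have [K2 [s2 [K1K2 s2s1 avoid2]]] :=
  patch_avoid (nth false c.1) s1 c.2 (leq_trans kK KK1).
exists K2, s2; split.
- exact: leq_trans KK1 K1K2.
- move=> i ikK; rewrite s2s1 ?s1s //; move: ikK; rewrite !mem_index_iota.
  by case/andP => -> /leq_trans; apply.
- move=> c'; rewrite inE => /predU1P [-> //|c'cs] y ay.
  apply: (avoid1 _ c'cs) => i; rewrite mem_iota add0n => iK1.
  rewrite ay ?mem_iota ?add0n ?(leq_trans iK1 K1K2) // /patch.
  case: ifP => // /negbT; rewrite -leqNgt => ki.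
  by rewrite s2s1 // mem_index_iota ki.
Qed.

Lemma patch_avoid_block n k : exists K' (s' : nat -> bool), [/\ (k < K')%N, s' k &
  forall t j, (j <= n)%N -> cyl (patch k t s') (iota 0 K') `<=` ~` F j].
Proof.
pose cs := [seq (val w, j) | w <- enum {: k.-tuple bool}, j <- iota 0 n.+1].
have [K' [s' [kK' s'1 avoid]]] := patch_avoid_all cs (fun _ => true) (leqnSn k).
exists K', s'; split => //; first by rewrite s'1 // mem_index_iota leqnn /=.
move=> t j jn; pose w := [tuple t i | i < k].
have wj : (val w, j) \in cs.
  by apply/allpairsP; exists (w, j); rewrite mem_enum mem_iota add0n ltnS jn.
apply: subset_trans (avoid _ wj) => y ay i; rewrite mem_iota add0n => iK'.
rewrite ay ?mem_iota ?add0n // /patch /=; case: ltnP => // ik.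
by rewrite (nth_mktuple _ _ (Ordinal ik)).
Qed.

Lemma patch_blocks : exists (K : nat -> nat) (S : nat -> nat -> bool), forall n,
  [/\ (K n < K n.+1)%N, S n (K n) &
      forall t j, (j <= n)%N -> cyl (patch (K n) t (S n)) (iota 0 (K n.+1)) `<=` ~` F j].
Proof.
have /choice [e eP] : forall nk : nat * nat, exists p : nat * (nat -> bool),
    [/\ (nk.2 < p.1)%N, p.2 nk.2 &
        forall t j, (j <= nk.1)%N -> cyl (patch nk.2 t p.2) (iota 0 p.1) `<=` ~` F j].
  by move=> [n k]; have [K' [s' ?]] := patch_avoid_block n k; exists (K', s').
pose K := fix K n := if n is n'.+1 then (e (n', K n')).1 else 0%N.
by exists K, (fun n => (e (n, K n)).2) => n; apply: (eP (n, K n)).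
Qed.

Variable L : set cantor_space.
Hypothesis L_ideal : ideal L.
Hypothesis LF : L `<=` \bigcup_n F n.

Lemma thin_setT : thin L (fun _ => true).
Proof.
have [K [S KS]] := patch_blocks.
have K_lt n : (K n < K n.+1)%N by case: (KS n).
have K_mono : {homo K : m n / (m <= n)%N}.
  by apply: homo_leq leqnn leq_trans _ => n; apply: ltnW.
have K_ge n : (n <= K n)%N by elim: n => // n IH; apply: leq_ltn_trans IH (K_lt n).
pose Q n := [seq i <- index_iota (K n) (K n.+1) | S n i].
exists Q.
  move=> n; have [Kn SK _] := KS n; split.
  - apply: contraTneq (_ : K n \in Q n) => [->//|].
    by rewrite mem_filter SK mem_index_iota leqnn Kn.
  - apply/allP => i; rewrite mem_filter mem_index_iota => /and3P [_ Ki _].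
    exact: leq_trans (K_ge n) Ki.
  - by apply/allP.
move=> A LA oA.
(* B keeps the points of A lying in some Q n, so it agrees with S n on every block
   of which A contains Q n. *)
pose B : cantor_space := fun i => A i && has (fun n => i \in Q n) (iota 0 i.+1).
have LB : L B by case: L_ideal => _ _ LS _; apply: LS LA => i /andP [].
have [m _ FmB] := LF LB.
have [n mn AQn] := oA m.
have [_ _ avoid] := KS n.
apply: (avoid B m mn B _ FmB) => i; rewrite mem_iota add0n => iK.
rewrite /patch; case: ifP => // /negbT; rewrite -leqNgt => Kni.
have iblock : i \in index_iota (K n) (K n.+1) by rewrite mem_index_iota Kni.
rewrite /B; case Sni: (S n i).
  have iQ : i \in Q n by rewrite mem_filter Sni.
  rewrite (allP AQn _ iQ) andTb; apply/hasP; exists n => //.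
  by rewrite mem_iota ltnS (leq_trans (K_ge n) Kni).
apply/negbTE; rewrite negb_and; apply/orP; right; apply/hasPn => n' _.
rewrite mem_filter; apply/negP => /andP [Sn'i i'block].
by move: Sni; rewrite (block_index_unique K_mono iblock i'block) Sn'i.
Qed.

End Talagrand.

Lemma meager_ideal_thin L : meager_ideal L -> thin L (fun _ => true).
Proof. by move=> [L_ideal [F [F_nd LF]]]; apply: thin_setT L_ideal LF. Qed.

Lemma sub_thick L : L `<=` thick L.
Proof.
move=> X LX [Q sprQ noL]; apply: (noL X LX) => N; exists N => //.
by have [] := sprQ N.
Qed.

Lemma subset_thick I L : I `<=` L -> thick I `<=` thick L.
Proof. by move=> IL X tX [Q sprQ noL]; apply: tX; exists Q => // A /IL; apply: noL. Qed.

Lemma thick_ideal L : meager_ideal L -> ideal (thick L).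
Proof.
move=> mL; have [[_ Lfin _ _] _] := mL; split.
- by apply; exact: meager_ideal_thin.
- by move=> A /Lfin /sub_thick.
- by move=> A B; apply: thickS.
- by move=> A B; apply: thickU; case: mL.
Qed.

Lemma thick_meager L : meager_ideal L -> meager (thick L).
Proof.
move=> /meager_ideal_thin [Q sprQ noL].
apply: meagerS (meager_not_often (spread_escaping sprQ)) => Y tY.
exact: thick_not_often sprQ noL tY.
Qed.

Lemma thick_hereditary_meager L : meager_ideal L -> hereditary_meager (thick L).
Proof.
move=> mL; split; first by split; [exact: thick_ideal | exact: thick_meager].
move=> X /contrapT [Q sprQ noL].
have escQ' := @escaping_pmap_insub _ _ {n | X n} _ (spread_escaping sprQ).
apply: meagerS (meager_not_often escQ') => _ [Y [tY _] <-] oY'.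
apply: (thick_not_often sprQ noL tY) => N; have [n Nn YQ'] := oY' N.
exists n => //; apply/allP => i iQ; have [_ _ /allP QX] := sprQ n.
by have := allP YQ' (exist _ i (QX i iQ)); rewrite mem_pmap_sub; apply.
Qed.

Theorem mainTheorem7 :
  exists Phi : set cantor_space -> set cantor_space,
    forall I : set cantor_space, meager_ideal I ->
      [/\ hereditary_meager (Phi I), I `<=` Phi I & sep_equiv (Phi I) I].
Proof.
exists thick => I mI; split; [exact: thick_hereditary_meager | exact: sub_thick |].
move=> K _; split => disj [L [mL [KL IL]]]; apply: disj.
- exists (thick L); split; first by case: (thick_hereditary_meager mL).
  by split; [exact: subset_trans KL (@sub_thick L) | exact: subset_thick].
- by exists L; split => //; split => //; apply: subset_trans (@sub_thick I) IL.
Qed.
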